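(* Let $\gamma=(a,b,c,d,e,f)$ be a coloring of the tetrahedron, and let $E(u)=u\prod_{i=1}^3(S_i-u)+\prod_{j=1}^4(u-T_j)$. Then $E(u)=Au^2+Bu+C'$ is a polynomial of degree at most $2$ in $u$, with $A=\frac12(ad+bc+ef)$ and $B=-\frac14\big(bc(b+c)+ad(a+d)+ef(e+f)+abc+abd+acd+bcd+abe+bce+ade+cde+acf+bcf+adf+bdf+aef+bef+cef+def\big)$, and its discriminant $D=B^2-4AC'$ satisfies $$D=-\tfrac14\det(C).$$ Consequently the number field generated by the roots of $E$ is $\mathbb Q(\sqrt{-\det C})$.
   Context: $S_1=\frac12(a+b+c+d)$, $S_2=\frac12(a+d+e+f)$, $S_3=\frac12(b+c+e+f)$, $T_1=\frac12(a+b+e)$, $T_2=\frac12(a+c+f)$, $T_3=\frac12(c+d+e)$, $T_4=\frac12(b+d+f)$. The (modified) Cayley–Menger matrix $C=(C_{ij})_{0\le i,j\le4}$ has $C_{00}=0$, $C_{0j}=-1$, $C_{j0}=1$ for $j\ge1$, and $C_{ij}=1-d_{ij}^2/2$ for $i,j\ge1$, where $d_{ii}=0$, $d_{ij}=d_{ji}$ and $d_{12}=a,\ d_{23}=b,\ d_{14}=c,\ d_{34}=d,\ d_{13}=e,\ d_{24}=f$. *)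

(* Colors are natural numbers, cast into algC
   (algebraic complex numbers), where sqrtC is available. *)
From HB Require Import structures.
From mathcomp Require Import all_boot all_order all_algebra all_field.
Set Implicit Arguments. Unset Strict Implicit. Unset Printing Implicit Defensive.
Import Order.TTheory GRing.Theory Num.Theory.
Local Open Scope ring_scope.

Section Tet.
Variables a b c d e f : algC.

Definition S1 : algC := (a + b + c + d) / 2.
Definition S2 : algC := (a + d + e + f) / 2.
Definition S3 : algC := (b + c + e + f) / 2.
Definition T1 : algC := (a + b + e) / 2.
Definition T2 : algC := (a + c + f) / 2.
Definition T3 : algC := (c + d + e) / 2.
Definition T4 : algC := (b + d + f) / 2.

(* edge lengths d_{ij}, vertices 1..4 encoded as 0..3:
   d12=a, d23=b, d14=c, d34=d, d13=e, d24=f, d_ii = 0 *)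
Definition tdist (i j : nat) : algC :=
  match i, j with
  | 0, 1 | 1, 0 => a
  | 1, 2 | 2, 1 => b
  | 0, 3 | 3, 0 => c
  | 2, 3 | 3, 2 => d
  | 0, 2 | 2, 0 => e
  | 1, 3 | 3, 1 => f
  | _, _ => 0
  end.

Definition CMmat : 'M[algC]_5 :=
  \matrix_(i < 5, j < 5)
    if (i == 0%N :> nat) && (j == 0%N :> nat) then 0
    else if (i == 0%N :> nat) then -1
    else if (j == 0%N :> nat) then 1
    else 1 - (tdist i.-1 j.-1) ^+ 2 / 2.

Definition Epoly : {poly algC} :=
  'X * ((S1%:P - 'X) * (S2%:P - 'X) * (S3%:P - 'X))
  + ('X - T1%:P) * ('X - T2%:P) * ('X - T3%:P) * ('X - T4%:P).

Definition Acoef : algC := (a * d + b * c + e * f) / 2.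

Definition Bcoef : algC :=
  - ((b * c * (b + c) + a * d * (a + d) + e * f * (e + f)
      + a*b*c + a*b*d + a*c*d + b*c*d + a*b*e + b*c*e + a*d*e + c*d*e
      + a*c*f + b*c*f + a*d*f + b*d*f + a*e*f + b*e*f + c*e*f + d*e*f) / 4).
End Tet.

Definition is_subfield (K : algC -> Prop) : Prop :=
  [/\ K 0, K 1,
      (forall x y, K x -> K y -> K (x - y)),
      (forall x y, K x -> K y -> K (x * y)) &
      (forall x, K x -> K x^-1)].

Definition gen_field (S : algC -> Prop) (x : algC) : Prop :=
  forall K, is_subfield K -> (forall s, S s -> K s) -> K x.

From HB Require Import structures.
From mathcomp Require Import all_boot all_order all_algebra all_field.
From mathcomp Require Import ring.
Import Order.TTheory GRing.Theory Num.Theory.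
Local Open Scope ring_scope.

(* 1. Since S1 + S2 + S3 = T1 + T2 + T3 + T4 (both are a + ... + f), the cubic
      and quartic terms of E(u) cancel: E is the quadratic A u^2 + B u + C'
      with C' = T1 T2 T3 T4 ([quartic_cancel], [Epoly_quadratic]).
   2. The Cayley-Menger determinant is computed symbolically through a
      first-row Laplace expansion [laplace_det] on nat-indexed entries, which
      reduces by computation; the identity B^2 - 4 A C' = -det(C)/4 is then
      a rational-function identity in a, ..., f ([discriminant_CM]).
   3. For a nonzero quadratic with coefficients in a subfield K and a square
      root delta of its discriminant, all roots lie in K iff delta does
      ([quadratic_roots_in_subfield], via the quadratic formula).
   4. Two generating sets give the same generated field as soon as they are
      contained in exactly the same subfields ([gen_field_eq]); since the
      coefficients of E lie in every subfield, the theorem follows with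
      delta = sqrt(-det C) / 2. *)

(* Finite sums as a plain recursive function, so that they unfold under [cbv]
   (big operators are locked). *)
Fixpoint nsum {R : nmodType} (n : nat) (F : nat -> R) : R :=
  if n is n'.+1 then nsum n' F + F n' else 0.

Lemma nsumE (R : nmodType) n (F : nat -> R) : nsum n F = \sum_(j < n) F j.
Proof. by elim: n => [|n IH] /=; rewrite ?big_ord0 // big_ord_recr IH. Qed.

(* Column index of the minor obtained by deleting column j: [bump j], written
   with the computable test [Nat.ltb]. *)
Definition skip_col (j k : nat) : nat := if Nat.ltb k j then k else k.+1.

Lemma skip_colE j k : skip_col j k = bump j k.
Proof.
rewrite /skip_col /bump; case: (PeanoNat.Nat.ltb_spec k j).
  by move=> /ssrnat.ltP lt_kj; rewrite leqNgt lt_kj.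
by move=> /ssrnat.leP le_jk; rewrite le_jk add1n.
Qed.

(* First-row Laplace expansion of the determinant of the n x n matrix with
   entries [g i j]; on a concrete size it reduces to a closed polynomial
   expression in the entries. *)
Fixpoint laplace_det {R : comNzRingType} (n : nat) (g : nat -> nat -> R) : R :=
  if n is n'.+1 then
    nsum n'.+1 (fun j => (if odd j then -1 else 1) * g 0%N j
                         * laplace_det n' (fun i k => g i.+1 (skip_col j k)))
  else 1.

(* The unfolding equation, stated so that [nsum] itself is not unfolded. *)
Lemma laplace_detS (R : comNzRingType) n (g : nat -> nat -> R) :
  laplace_det n.+1 g = nsum n.+1 (fun j => (if odd j then -1 else 1) * g 0%N j
                         * laplace_det n (fun i k => g i.+1 (skip_col j k))).
Proof. by []. Qed.

Lemma det_laplace (R : comNzRingType) n (g : nat -> nat -> R) :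
  \det (\matrix_(i < n, j < n) g i j) = laplace_det n g.
Proof.
elim: n g => [|n IH] g; first by rewrite det_mx00.
rewrite (expand_det_row _ ord0) laplace_detS nsumE; apply: eq_bigr => j _.
have minorE : row' ord0 (col' j (\matrix_(i < n.+1, k < n.+1) g i k))
              = \matrix_(i < n, k < n) g i.+1 (skip_col j k).
  by apply/matrixP => i k; rewrite !mxE skip_colE.
rewrite mxE /cofactor minorE (IH (fun i k => g i.+1 (skip_col j k))) add0n.
by rewrite -signr_odd mulrA [_ * (-1) ^+ _]mulrC; case: odd.
Qed.

Definition CMentry (a b c d e f : algC) (i j : nat) : algC :=
  match i, j with
  | 0, 0 => 0
  | 0, _ => -1
  | _, 0 => 1
  | i'.+1, j'.+1 => 1 - tdist a b c d e f i' j' ^+ 2 / 2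
  end.

Lemma CMmatE (a b c d e f : algC) :
  CMmat a b c d e f = \matrix_(i < 5, j < 5) CMentry a b c d e f i j.
Proof. by apply/matrixP => -[[|i] ?] [[|j] ?]; rewrite !mxE. Qed.

Lemma discriminant_CM (a b c d e f : algC) :
  Bcoef a b c d e f ^+ 2
    - 4 * Acoef a b c d e f * (T1 a b e * T2 a c f * T3 c d e * T4 b d f)
  = - (\det (CMmat a b c d e f) / 4).
Proof.
rewrite CMmatE det_laplace.
cbv beta iota zeta
  delta [laplace_det nsum skip_col Nat.ltb Nat.leb odd negb CMentry tdist].
by rewrite /Bcoef /Acoef /T1 /T2 /T3 /T4; field.
Qed.

Lemma quartic_cancel (R : comNzRingType) (x1 x2 x3 t1 t2 t3 t4 : R) :
  x1 + x2 + x3 = t1 + t2 + t3 + t4 ->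
  'X * ((x1%:P - 'X) * (x2%:P - 'X) * (x3%:P - 'X))
  + ('X - t1%:P) * ('X - t2%:P) * ('X - t3%:P) * ('X - t4%:P)
  = ((t1 * t2 + t1 * t3 + t1 * t4 + t2 * t3 + t2 * t4 + t3 * t4)
       - (x1 * x2 + x1 * x3 + x2 * x3)) *: 'X^2
  + (x1 * x2 * x3 - (t1 * t2 * t3 + t1 * t2 * t4 + t1 * t3 * t4 + t2 * t3 * t4))
       *: 'X
  + (t1 * t2 * t3 * t4)%:P.
Proof.
move=> sum_eq.
have -> : x3 = t1 + t2 + t3 + t4 - x1 - x2 by rewrite -sum_eq; ring.
by rewrite -!mul_polyC; ring.
Qed.

Lemma Epoly_quadratic (a b c d e f : algC) :
  Epoly a b c d e f = Acoef a b c d e f *: 'X^2 + Bcoef a b c d e f *: 'X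
                      + (T1 a b e * T2 a c f * T3 c d e * T4 b d f)%:P.
Proof.
rewrite /Epoly quartic_cancel; last by rewrite /S1 /S2 /S3 /T1 /T2 /T3 /T4; field.
congr (_ *: _ + _ *: _ + _).
  by rewrite /Acoef /S1 /S2 /S3 /T1 /T2 /T3 /T4; field.
by rewrite /Bcoef /S1 /S2 /S3 /T1 /T2 /T3 /T4; field.
Qed.

Section Subfield.
Variable K : algC -> Prop.
Hypothesis K_field : is_subfield K.

Lemma subfield0 : K 0. Proof. by case: K_field. Qed.
Lemma subfield1 : K 1. Proof. by case: K_field. Qed.
Lemma subfieldB x y : K x -> K y -> K (x - y).
Proof. by case: K_field => _ _ K_sub _ _; apply: K_sub. Qed.
Lemma subfieldM x y : K x -> K y -> K (x * y).
Proof. by case: K_field => _ _ _ K_mul _; apply: K_mul. Qed.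
Lemma subfieldV x : K x -> K x^-1.
Proof. by case: K_field => _ _ _ _ K_inv; apply: K_inv. Qed.

Lemma subfieldN x : K x -> K (- x).
Proof. by move=> Kx; rewrite -sub0r; apply: subfieldB => //; apply: subfield0. Qed.

Lemma subfieldD x y : K x -> K y -> K (x + y).
Proof. by move=> Kx Ky; rewrite -[y]opprK; apply/subfieldB/subfieldN. Qed.

Lemma subfield_nat n : K n%:R.
Proof.
elim: n => [|n IH]; first exact: subfield0.
by rewrite mulrS; apply: subfieldD => //; apply: subfield1.
Qed.
End Subfield.

Ltac subfield_closure K_field :=
  repeat first
    [ assumption
    | exact: (subfield0 _ K_field) | exact: (subfield1 _ K_field)
    | exact: (subfield_nat _ K_field _)
    | apply: (subfieldD _ K_field) | apply: (subfieldN _ K_field)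
    | apply: (subfieldM _ K_field) | apply: (subfieldV _ K_field) ].

Lemma gen_field_eq (S T : algC -> Prop) :
  (forall K, is_subfield K -> (forall s, S s -> K s) <-> (forall t, T t -> K t)) ->
  forall x, gen_field S x <-> gen_field T x.
Proof.
move=> same_subfields x; split=> gen_x K K_field K_contains; apply: gen_x => //.
  by apply/same_subfields.
by apply/same_subfields.
Qed.

Lemma quadratic_rootE (A B C r : algC) :
  root (A *: 'X^2 + B *: 'X + C%:P) r = (A * r ^+ 2 + B * r + C == 0).
Proof. by rewrite /root !hornerD !hornerZ hornerXn hornerX hornerC. Qed.

Lemma quadratic_formula (A B C delta r : algC) :
  A != 0 -> delta ^+ 2 = B ^+ 2 - 4 * A * C ->
  root (A *: 'X^2 + B *: 'X + C%:P) r
  <-> r = (delta - B) / (2 * A) \/ r = (- delta - B) / (2 * A).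
Proof.
move=> A_neq0 delta_sqr.
have solution_is_root (s : algC) : s ^+ 2 = B ^+ 2 - 4 * A * C ->
    A * ((s - B) / (2 * A)) ^+ 2 + B * ((s - B) / (2 * A)) + C == 0.
  move=> s_sqr.
  have -> : A * ((s - B) / (2 * A)) ^+ 2 + B * ((s - B) / (2 * A)) + C
            = (s ^+ 2 - (B ^+ 2 - 4 * A * C)) / (4 * A).
    by field.
  by rewrite s_sqr subrr mul0r.
rewrite quadratic_rootE; split=> [/eqP root_r | [] ->].
- have : (2 * A * r + B) ^+ 2 = delta ^+ 2.
    transitivity (B ^+ 2 - 4 * A * C + 4 * A * (A * r ^+ 2 + B * r + C)).
      by ring.
    by rewrite root_r mulr0 addr0 delta_sqr.
  move/eqP; rewrite eqf_sqr => /orP[] /eqP sol; [left | right];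
    by rewrite -sol; field.
- exact: solution_is_root.
- by apply: solution_is_root; rewrite sqrrN.
Qed.

Lemma quadratic_roots_in_subfield {K : algC -> Prop} {A B C delta : algC} :
  is_subfield K -> K A -> K B -> K C ->
  A *: 'X^2 + B *: 'X + C%:P != 0 -> delta ^+ 2 = B ^+ 2 - 4 * A * C ->
  (forall r, root (A *: 'X^2 + B *: 'X + C%:P) r -> K r) <-> K delta.
Proof.
move=> K_field KA KB KC p_neq0 delta_sqr.
have [A0 | A_neq0] := eqVneq A 0.
  (* Degenerate case: delta = +-B, and the only possible root is -C/B. *)
  have K_delta : K delta.
    have /eqP : delta ^+ 2 = B ^+ 2 by rewrite delta_sqr A0 mulr0 mul0r subr0.
    by rewrite eqf_sqr => /orP[] /eqP ->; subfield_closure K_field.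
  split=> // _ r; rewrite quadratic_rootE A0 mul0r add0r.
  have [B0 | B_neq0] := eqVneq B 0.
    by move: p_neq0; rewrite A0 B0 !scale0r !add0r polyC_eq0 mul0r add0r => /negPf ->.
  rewrite addr_eq0 => /eqP Br; have -> : r = - C / B by rewrite -Br mulrC mulKf.
  by subfield_closure K_field.
have roots_formula r := quadratic_formula A B C delta r A_neq0 delta_sqr.
split=> [roots_in_K | K_delta r /roots_formula [] ->]; last 2 first.
- by subfield_closure K_field.
- by subfield_closure K_field.
have K_root := roots_in_K _ (proj2 (roots_formula _) (or_introl erefl)).
have -> : delta = 2 * A * ((delta - B) / (2 * A)) + B by field.
by subfield_closure K_field.
Qed.

Theorem lemma9p3 (a b c d e f : nat) :
  let a' : algC := a%:R in let b' : algC := b%:R in let c' : algC := c%:R in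
  let d' : algC := d%:R in let e' : algC := e%:R in let f' : algC := f%:R in
  let E := Epoly a' b' c' d' e' f' in
  let A := Acoef a' b' c' d' e' f' in
  let B := Bcoef a' b' c' d' e' f' in
  let detC := \det (CMmat a' b' c' d' e' f') in
  (exists C' : algC,
      E = A *: 'X^2 + B *: 'X + C'%:P
      /\ B ^+ 2 - 4 * A * C' = - (detC / 4))
  /\ (E != 0 ->
      forall x : algC,
        gen_field (fun r => root E r) x <->
        gen_field (fun s => s = sqrtC (- detC)) x).
Proof.
move=> a' b' c' d' e' f' E A B detC.
pose C' := T1 a' b' e' * T2 a' c' f' * T3 c' d' e' * T4 b' d' f'.
have E_quadratic : E = A *: 'X^2 + B *: 'X + C'%:P by exact: Epoly_quadratic.
have disc : B ^+ 2 - 4 * A * C' = - (detC / 4) by exact: discriminant_CM.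
split; first by exists C'.
move=> E_neq0; apply: gen_field_eq => K K_field.
have [KA KB KC'] : [/\ K A, K B & K C'].
  by rewrite /A /B /C' /Acoef /Bcoef /T1 /T2 /T3 /T4; split; subfield_closure K_field.
set s := sqrtC (- detC).
have half_s_sqr : (s / 2) ^+ 2 = B ^+ 2 - 4 * A * C'.
  by rewrite disc expr_div_n sqrtCK; field.
have := quadratic_roots_in_subfield K_field KA KB KC' _ half_s_sqr.
rewrite -E_quadratic => /(_ E_neq0) roots_in_K.
split=> [/roots_in_K K_half_s _ -> | /(_ s erefl) K_s].
  have -> : s = s / 2 * 2 by field.
  by subfield_closure K_field.
by apply/roots_in_K; subfield_closure K_field.
Qed.
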